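(* Let $X$ be a vector field on $\mathbb{S}^1$ with support function $\phi_X$, let $A\in\mathrm{O}_0(1,2)$ and $\sigma\in\mathbb{R}^{1,2}$. Then the support function of $A_*X+\Lambda(\sigma)$ satisfies $\mathrm{gr}(\phi_{A_*X+\Lambda(\sigma)})=\mathrm{Is}(A,\sigma)\,\mathrm{gr}(\phi_X)$.
   Context: $\mathbb{R}^{1,2}$ is $\mathbb{R}^3$ with $\langle x,y\rangle=-x_0y_0+x_1y_1+x_2y_2$; $\mathrm{O}_0(1,2)$ is the identity component of its linear isometry group, acting on the closed Klein disk $\overline{\mathbb{D}^2}$ (and on $\mathbb{S}^1$) by $A\cdot\eta=\Pi(A(1,\eta))$ where $\Pi(x_0,x_1,x_2)=(x_1/x_0,x_2/x_0)$. $A_*X$ is the pushforward of the vector field $X$ by the diffeomorphism $z\mapsto A\cdot z$ of $\mathbb{S}^1$. The Killing field $\Lambda(\sigma)$ (extended to $\mathbb{S}^1$) is $\eta\mapsto\mathrm{d}_{(1,\eta)}\Pi((1,\eta)\boxtimes\sigma)$, where $\langle x\boxtimes y,v\rangle=\det(x,y,v)$. The support function of a vector field $Y$ on $\mathbb{S}^1$ is $\phi_Y$ with $Y(z)=iz\phi_Y(z)$, and $\mathrm{gr}(\phi_Y)=\{(z,\phi_Y(z)):z\in\mathbb{S}^1\}\subset\overline{\mathbb{D}^2}\times\mathbb{R}$. The map $\mathrm{Is}(A,\sigma)$ acts on $\overline{\mathbb{D}^2}\times\mathbb{R}$ by $\mathrm{Is}(A,\sigma)(\eta,t)=\left(A\cdot\eta,\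 \frac{t}{-\langle A(1,\eta),(1,0,0)\rangle}+\langle(1,A\cdot\eta),\sigma\rangle\right)$. *)

From HB Require Import structures.
From mathcomp Require Import all_boot all_order all_algebra.
From mathcomp Require Import all_classical all_reals all_analysis.
Set Implicit Arguments. Unset Strict Implicit. Unset Printing Implicit Defensive.
Import Order.TTheory GRing.Theory Num.Theory.
Import numFieldNormedType.Exports.
Local Open Scope ring_scope.
Local Open Scope classical_set_scope.

Section Defs.
Variable R : realType.

Definition kcv3 (a b c : R) : 'cV[R]_3 := \col_(i < 3) nth 0 [:: a; b; c] i.
Definition kcv2 (a b : R) : 'cV[R]_2 := \col_(i < 2) nth 0 [:: a; b] i.
Definition kco n (x : 'cV[R]_n.+1) (k : nat) : R := x (inord k) ord0.

Definition kmink (x y : 'cV[R]_3) : R :=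
  - kco x 0 * kco y 0 + kco x 1 * kco y 1 + kco x 2 * kco y 2.

(* identity component O_0(1,2) = SO^+(1,2): linear isometries of kmink with
   det 1 preserving the time orientation *)
Definition O0_12 : set 'M[R]_3 :=
  [set A | (forall x y : 'cV[R]_3, kmink (A *m x) (A *m y) = kmink x y)
           /\ \det A = 1 /\ 0 < A ord0 ord0].

Definition Circ : set 'cV[R]_2 := [set z | kco z 0 ^+ 2 + kco z 1 ^+ 2 = 1].

Definition kPi (x : 'cV[R]_3) : 'cV[R]_2 := kcv2 (kco x 1 / kco x 0) (kco x 2 / kco x 0).
Definition klift1 (eta : 'cV[R]_2) : 'cV[R]_3 := kcv3 1 (kco eta 0) (kco eta 1).
Definition kact (A : 'M[R]_3) (eta : 'cV[R]_2) : 'cV[R]_2 := kPi (A *m klift1 eta).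

Definition kpush (A : 'M[R]_3) (X : 'cV[R]_2 -> 'cV[R]_2) (w : 'cV[R]_2) : 'cV[R]_2 :=
  let z := kact (invmx A) w in derive (kact A) z (X z).

Definition kdet3 (x y v : 'cV[R]_3) : R :=
  \det (\matrix_(i < 3, j < 3) kco (nth x [:: x; y; v] j) i).
(* x ⊠ y, the vector with  kmink (x ⊠ y) v = det(x, y, v)  for all v *)
Definition kboxt (x y : 'cV[R]_3) : 'cV[R]_3 :=
  \col_(k < 3) (kco (kcv3 (-1) 1 1) k * kdet3 x y (delta_mx k ord0)).

Definition kLam (sigma : 'cV[R]_3) (eta : 'cV[R]_2) : 'cV[R]_2 :=
  derive kPi (klift1 eta) (kboxt (klift1 eta) sigma).

(* multiplication by i:  z |-> i z *)
Definition krot (z : 'cV[R]_2) : 'cV[R]_2 := kcv2 (- kco z 1) (kco z 0).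
(* support function: the scalar phi_Y(z) with Y(z) = i z phi_Y(z)
   (for tangent Y and |z| = 1 it is the coordinate <Y(z), iz>) *)
Definition ksupp (Y : 'cV[R]_2 -> 'cV[R]_2) (z : 'cV[R]_2) : R :=
  kco (Y z) 0 * kco (krot z) 0 + kco (Y z) 1 * kco (krot z) 1.

Definition kgr (phi : 'cV[R]_2 -> R) : set ('cV[R]_2 * R) :=
  [set p | Circ p.1 /\ p.2 = phi p.1].

Definition kIs (A : 'M[R]_3) (sigma : 'cV[R]_3) (p : 'cV[R]_2 * R) : 'cV[R]_2 * R :=
  (kact A p.1,
   p.2 / (- kmink (A *m klift1 p.1) (kcv3 1 0 0)) + kmink (klift1 (kact A p.1)) sigma).

End Defs.
Arguments Circ {R}.
Arguments O0_12 {R}.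

From HB Require Import structures.
From mathcomp Require Import all_boot all_order all_algebra.
From mathcomp Require Import all_classical all_reals all_analysis.
From mathcomp Require Import ring lra.
Set Implicit Arguments. Unset Strict Implicit. Unset Printing Implicit Defensive.
Import Order.TTheory GRing.Theory Num.Theory.
Import numFieldNormedType.Exports.
Local Open Scope ring_scope.
Local Open Scope classical_set_scope.

(* For z on the circle, A (1, z) = c (1, A . z) with c := (A (1, z))_0 nonzero, as the
   light cone meets {x_0 = 0} only at the origin.  Since A in SO(1,2) preserves both the
   Minkowski form and the determinant, it commutes with the product x ⊠ y, characterised by
   <x ⊠ y, v> = det (x, y, v); together with (1, z) ⊠ (0, i z) = - (1, z) this shows that
   the differential of the action sends i z to (1/c) i (A . z).  Hence the support function
   of A_* X at A . z is phi_X(z) / c.  On the circle Lambda(sigma) is <(1, w), sigma> i w,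
   which accounts for the translation part of Is(A, sigma). *)

Section KleinModel.
Variable R : realType.
Implicit Types (a b c : R) (x y u v s : 'cV[R]_3) (z w : 'cV[R]_2) (M : 'M[R]_3).

Lemma kco_cv3_0 a b c : kco (kcv3 a b c) 0 = a. Proof. by rewrite /kco !mxE !inordK. Qed.
Lemma kco_cv3_1 a b c : kco (kcv3 a b c) 1 = b. Proof. by rewrite /kco !mxE !inordK. Qed.
Lemma kco_cv3_2 a b c : kco (kcv3 a b c) 2 = c. Proof. by rewrite /kco !mxE !inordK. Qed.
Lemma kco_cv2_0 a b : kco (kcv2 a b) 0 = a. Proof. by rewrite /kco !mxE !inordK. Qed.
Lemma kco_cv2_1 a b : kco (kcv2 a b) 1 = b. Proof. by rewrite /kco !mxE !inordK. Qed.

Lemma kcoD n (x y : 'cV[R]_n.+1) k : kco (x + y) k = kco x k + kco y k.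
Proof. by rewrite /kco mxE. Qed.
Lemma kcoZ n c (x : 'cV[R]_n.+1) k : kco (c *: x) k = c * kco x k.
Proof. by rewrite /kco mxE. Qed.
Lemma kcoN n (x : 'cV[R]_n.+1) k : kco (- x) k = - kco x k.
Proof. by rewrite /kco mxE. Qed.
Lemma kco0 n k : kco (0 : 'cV[R]_n.+1) k = 0.
Proof. by rewrite /kco mxE. Qed.

Definition kcoE := (kco_cv3_0, kco_cv3_1, kco_cv3_2, kco_cv2_0, kco_cv2_1,
  kcoD, kcoZ, kcoN, kco0).

Lemma colE n (x : 'cV[R]_n.+1) : x = \col_j kco x j.
Proof. by apply/matrixP => i j; rewrite !mxE /kco inord_val [j]ord1. Qed.

Lemma cv2_ext z w : kco z 0 = kco w 0 -> kco z 1 = kco w 1 -> z = w.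
Proof.
move=> e0 e1; rewrite (colE z) (colE w); apply/matrixP => i j; rewrite !mxE.
by case: i => [[|[|]]].
Qed.

Lemma cv3_ext x y :
  kco x 0 = kco y 0 -> kco x 1 = kco y 1 -> kco x 2 = kco y 2 -> x = y.
Proof.
move=> e0 e1 e2; rewrite (colE x) (colE y); apply/matrixP => i j; rewrite !mxE.
by case: i => [[|[|[|]]]].
Qed.

Lemma kdet3E x y v : kdet3 x y v =
  kco x 0 * (kco y 1 * kco v 2 - kco v 1 * kco y 2)
  - kco y 0 * (kco x 1 * kco v 2 - kco v 1 * kco x 2)
  + kco v 0 * (kco x 1 * kco y 2 - kco y 1 * kco x 2).
Proof.
rewrite /kdet3 (expand_det_row _ ord0) !big_ord_recl big_ord0 /cofactor.
rewrite !(expand_det_row _ ord0) !big_ord_recl !big_ord0 /cofactor !det_mx11.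
by rewrite !mxE /bump /=; ring.
Qed.

Lemma kco_delta (k i : nat) : (k < 3)%N -> (i < 3)%N ->
  kco (delta_mx (inord k) ord0 : 'cV[R]_3) i = (i == k)%:R.
Proof. by move=> kl il; rewrite /kco mxE eqxx andbT -val_eqE /= !inordK. Qed.

Lemma kboxtE x y : kboxt x y =
  kcv3 (kco x 2 * kco y 1 - kco x 1 * kco y 2)
       (kco x 2 * kco y 0 - kco x 0 * kco y 2)
       (kco x 0 * kco y 1 - kco x 1 * kco y 0).
Proof.
apply: cv3_ext; rewrite /kboxt {1}/kco mxE inordK // !kdet3E !kco_delta // !kcoE /=.
all: ring.
Qed.

Lemma kmink_boxt x y v : kmink (kboxt x y) v = kdet3 x y v.
Proof. by rewrite kboxtE kdet3E /kmink !kcoE; ring. Qed.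

Lemma kdet3_mul M x y v :
  kdet3 (M *m x) (M *m y) (M *m v) = \det M * kdet3 x y v.
Proof.
rewrite /kdet3 -det_mulmx; congr (\det _); apply/matrixP => i j.
rewrite !mxE; case: j => [[|[|[|//]]] ?] /=; rewrite /kco mxE inord_val;
  by apply: eq_bigr => k _; rewrite mxE inord_val.
Qed.

Lemma kmink_ext u u' : (forall v, kmink u v = kmink u' v) -> u = u'.
Proof.
move=> e; have := e (kcv3 1 0 0); have := e (kcv3 0 1 0); have := e (kcv3 0 0 1).
rewrite /kmink !kcoE !(mulr0, mulr1, addr0, add0r) => e2 e1 /eqP.
by rewrite eqr_opp => /eqP e0; apply: cv3_ext.
Qed.

Definition kmink_isometry M := forall x y, kmink (M *m x) (M *m y) = kmink x y.

Lemma kmink_isometryV M :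
  M \in unitmx -> kmink_isometry M -> kmink_isometry (invmx M).
Proof. by move=> Mu isoM x y; rewrite -isoM !mulKVmx. Qed.

Lemma mulmx_kboxt M x y : kmink_isometry M -> \det M = 1 ->
  M *m kboxt x y = kboxt (M *m x) (M *m y).
Proof.
move=> isoM detM; have Mu : M \in unitmx by rewrite unitmxE detM unitr1.
apply: kmink_ext => v; rewrite -[v in LHS](mulKVmx Mu) isoM !kmink_boxt.
by rewrite -[v in RHS](mulKVmx Mu) kdet3_mul detM mul1r.
Qed.

Definition klift0 z : 'cV[R]_3 := kcv3 0 (kco z 0) (kco z 1).

Lemma kPi_lift1 z : kPi (klift1 z) = z.
Proof. by apply: cv2_ext; rewrite /kPi /klift1 !kcoE divr1. Qed.

Lemma lift1_kPi x : kco x 0 != 0 -> klift1 (kPi x) = (kco x 0)^-1 *: x.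
Proof. by move=> x0; apply: cv3_ext; rewrite /kPi /klift1 !kcoE; field. Qed.

Lemma kPiZ c x : c != 0 -> kPi (c *: x) = kPi x.
Proof. by move=> c0; apply: cv2_ext; rewrite /kPi !kcoE invfM mulrACA divff ?mul1r. Qed.

Lemma kmink_lift1 z : Circ z -> kmink (klift1 z) (klift1 z) = 0.
Proof.
by rewrite /Circ /kmink /klift1 !kcoE /= => zC; rewrite mulr1 -addrA -!expr2 zC addNr.
Qed.

Lemma kmink_null_time0 x : kmink x x = 0 -> kco x 0 = 0 -> x = 0.
Proof.
rewrite /kmink => + x0; rewrite x0 mulr0 add0r -!expr2 => /eqP.
rewrite paddr_eq0 ?sqr_ge0 // !sqrf_eq0 => /andP[/eqP x1 /eqP x2].
by apply: cv3_ext; rewrite kco0.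
Qed.

Lemma kactM M N z :
  kco (N *m klift1 z) 0 != 0 -> kact M (kact N z) = kact (M *m N) z.
Proof.
by move=> n0; rewrite /kact lift1_kPi // -scalemxAr kPiZ ?invr_neq0 // mulmxA.
Qed.

Section MinkowskiIsometry.
Variable M : 'M[R]_3.
Hypotheses (Mu : M \in unitmx) (isoM : kmink_isometry M).

Lemma kco_lift1_neq0 z : Circ z -> kco (M *m klift1 z) 0 != 0.
Proof.
move=> zC; apply/eqP => /(kmink_null_time0 _); rewrite isoM kmink_lift1 // => /(_ erefl).
move/(congr1 (mulmx (invmx M))); rewrite mulKmx // mulmx0 => /(congr1 (fun x => kco x 0)).
by rewrite /klift1 !kcoE => /eqP; rewrite oner_eq0.
Qed.

Lemma kact_circ z : Circ z -> Circ (kact M z).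
Proof.
move=> zC; have := kco_lift1_neq0 zC; have := kmink_lift1 zC; rewrite -isoM.
rewrite /Circ /= /kact /kPi /kmink !kcoE.
set p0 := kco _ 0; set p1 := kco _ 1; set p2 := kco _ 2 => null p0N0.
rewrite !expr_div_n -mulrDl (_ : p1 ^+ 2 + p2 ^+ 2 = p0 ^+ 2).
  by rewrite divff // expf_neq0.
by rewrite !expr2; lra.
Qed.

Lemma kactK z : Circ z -> kact (invmx M) (kact M z) = z.
Proof. by move=> zC; rewrite kactM ?mulVmx /kact ?mul1mx ?kPi_lift1 ?kco_lift1_neq0. Qed.

End MinkowskiIsometry.

Lemma kactKV M w : M \in unitmx -> kmink_isometry M -> Circ w ->
  kact M (kact (invmx M) w) = w.
Proof.
move=> Mu isoM wC; have Vu : invmx M \in unitmx by rewrite unitmx_inv.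
rewrite kactM ?mulmxV /kact ?mul1mx ?kPi_lift1 //.
exact: (kco_lift1_neq0 Vu (kmink_isometryV Mu isoM)).
Qed.

Lemma derive_kPi x u : kco x 0 != 0 ->
  derive (@kPi R) x u = (kco x 0)^-1 *: (kcv2 (kco u 1) (kco u 2) - kco u 0 *: kPi x).
Proof.
move=> x0; set V := _ - _.
(* for small h != 0 the difference quotient is exactly (kco x 0 + h * kco u 0)^-1 *: V *)
have den : (fun h : R => kco x 0 + h * kco u 0) @ 0^' --> kco x 0.
  have : (fun h : R => kco x 0 + h * kco u 0) @ 0 --> kco x 0 + 0 * kco u 0.
    by apply: cvgD; [exact: cvg_cst | apply: cvgM; [exact: cvg_id | exact: cvg_cst]].
  by rewrite mul0r addr0; exact: cvg_within_filter.
have quot : (fun h : R => (kco x 0 + h * kco u 0)^-1 *: V) @ 0^' --> (kco x 0)^-1 *: V.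
  by apply: cvgZ; [exact: cvgV | exact: cvg_cst].
apply: cvg_lim; first exact: norm_hausdorff.
apply: cvg_trans quot; apply: near_eq_cvg; near=> h.
have h0 : h != 0 by near: h; exact: nbhs_dnbhs_neq.
have den0 : kco x 0 + h * kco u 0 != 0 by near: h; exact: cvgr_neq0 den x0.
by apply: cv2_ext; rewrite /= /shift /V /kPi !kcoE; field; rewrite addrC den0 x0 h0.
Unshelve. all: by end_near.
Qed.

Lemma derive_kPiZ x a u : kco x 0 != 0 ->
  derive (@kPi R) x (a *: u) = a *: derive (@kPi R) x u.
Proof. by move=> x0; rewrite !derive_kPi //; apply: cv2_ext; rewrite !kcoE; ring. Qed.

Lemma derive_kPi_boxt x s : kco x 0 != 0 -> kboxt x s = - x ->
  derive (@kPi R) x s = (kco x 0)^-1 *: krot (kPi x).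
Proof.
move=> x0 xs; rewrite derive_kPi //; congr (_ *: _).
have := congr1 (fun y => kco y 1) xs; have := congr1 (fun y => kco y 2) xs.
rewrite kboxtE !kcoE => e2 e1; apply: cv2_ext; rewrite /krot /kPi !kcoE.
  by rewrite -[- (_ / _)]mulNr -e2; field.
by rewrite -[kco x 1 / _]opprK -[- (_ / _)]mulNr -e1; field.
Qed.

Lemma derive_kact M z w :
  derive (kact M) z w = derive (@kPi R) (M *m klift1 z) (M *m klift0 w).
Proof.
have lift1D h : klift1 (h *: w + z) = h *: klift0 w + klift1 z.
  by apply: cv3_ext; rewrite /klift0 /klift1 !kcoE; ring.
rewrite /derive; congr (lim (_ @ _^')); apply: funext => h /=.
by rewrite /shift /kact lift1D mulmxDr scalemxAr.
Qed.

Lemma kboxt_lift_krot z : Circ z -> kboxt (klift1 z) (klift0 (krot z)) = - klift1 z.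
Proof.
rewrite /Circ /= => zC; rewrite kboxtE; apply: cv3_ext; rewrite /klift0 /klift1 /krot !kcoE.
- by rewrite -zC; ring.
- by ring.
- by ring.
Qed.

Lemma derive_kact_krot M z a : kmink_isometry M -> \det M = 1 -> Circ z ->
  derive (kact M) z (a *: krot z) = (a / kco (M *m klift1 z) 0) *: krot (kact M z).
Proof.
move=> isoM detM zC; have Mu : M \in unitmx by rewrite unitmxE detM unitr1.
have c0 := kco_lift1_neq0 Mu isoM zC.
have liftZ : klift0 (a *: krot z) = a *: klift0 (krot z).
  by apply: cv3_ext; rewrite /klift0 !kcoE ?mulr0.
rewrite derive_kact liftZ -scalemxAr derive_kPiZ // derive_kPi_boxt //.
  by rewrite scalerA.
by rewrite -mulmx_kboxt // kboxt_lift_krot // mulmxN.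
Qed.

Lemma kLam_circ sigma w : Circ w -> kLam sigma w = kmink (klift1 w) sigma *: krot w.
Proof.
rewrite /Circ /= => wC; rewrite /kLam derive_kPi; last by rewrite kco_cv3_0 oner_neq0.
rewrite kPi_lift1 kboxtE /klift1 kco_cv3_0 invr1 scale1r.
have wC0 : kco w 0 ^+ 2 + kco w 1 ^+ 2 - 1 = 0 by rewrite wC subrr.
apply: cv2_ext; rewrite /kmink /krot !kcoE; apply/eqP; rewrite -subr_eq0; apply/eqP.
  by transitivity (kco sigma 2 * (kco w 0 ^+ 2 + kco w 1 ^+ 2 - 1));
    [ring | rewrite wC0 mulr0].
by transitivity (- kco sigma 1 * (kco w 0 ^+ 2 + kco w 1 ^+ 2 - 1));
  [ring | rewrite wC0 mulr0].
Qed.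

Lemma ksupp_tangent (Y : 'cV[R]_2 -> 'cV[R]_2) w a :
  Circ w -> Y w = a *: krot w -> ksupp Y w = a.
Proof.
rewrite /Circ /= => wC Yw; rewrite /ksupp Yw /krot !kcoE.
by rewrite -[RHS]mulr1 -wC; ring.
Qed.

Lemma kgr_image (T : 'cV[R]_2 * R -> 'cV[R]_2 * R) (f g : 'cV[R]_2 -> 'cV[R]_2)
    (phi psi : 'cV[R]_2 -> R) :
  (forall p, (T p).1 = f p.1) ->
  (forall z, Circ z -> Circ (f z)) ->
  (forall w, Circ w -> Circ (g w) /\ f (g w) = w) ->
  (forall z, Circ z -> psi (f z) = (T (z, phi z)).2) ->
  kgr psi = T @` kgr phi.
Proof.
move=> Tf fC gC psi_f; apply/seteqP; split=> [[w _] [/= wC ->] | _ [[z _] [/= zC ->] <-]].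
  have [gwC fgw] := gC w wC.
  exists (g w, phi (g w)) => //.
  by rewrite [T _]surjective_pairing Tf -psi_f ?fgw.
by rewrite /kgr /= Tf; split; [exact: fC | rewrite psi_f].
Qed.

Lemma kmink_e0 x : - kmink x (kcv3 1 0 0) = kco x 0.
Proof. by rewrite /kmink !kcoE; ring. Qed.

End KleinModel.

Unset Implicit Arguments.

Theorem lemma2p12 (R : realType) (X : 'cV[R]_2 -> 'cV[R]_2)
    (A : 'M[R]_3) (sigma : 'cV[R]_3) :
  (forall z, Circ z -> X z = ksupp X z *: krot z) ->
  O0_12 A ->
  let Y := fun w => kpush A X w + kLam sigma w in
  (forall z, Circ z -> Y z = ksupp Y z *: krot z) /\
  kgr (ksupp Y) = kIs A sigma @` kgr (ksupp X).
Proof.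
move=> Xtan [isoA [detA _]] Y.
have Au : A \in unitmx by rewrite unitmxE detA unitr1.
have Y_act z : Circ z -> Y (kact A z) =
    (ksupp X z / kco (A *m klift1 z) 0 + kmink (klift1 (kact A z)) sigma)
      *: krot (kact A z).
  move=> zC; rewrite /Y /kpush kactK // (Xtan z zC) derive_kact_krot //.
  by rewrite kLam_circ ?scalerDl //; exact: kact_circ.
have supp_act z : Circ z -> ksupp Y (kact A z) =
    ksupp X z / kco (A *m klift1 z) 0 + kmink (klift1 (kact A z)) sigma.
  by move=> zC; apply: ksupp_tangent (Y_act z zC); exact: kact_circ.
have inv_act w : Circ w -> Circ (kact (invmx A) w) /\ kact A (kact (invmx A) w) = w.
  move=> wC; split; last exact: kactKV.
  apply: kact_circ wC; first by rewrite unitmx_inv.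
  exact: kmink_isometryV.
split=> [w wC | ].
  have [zC <-] := inv_act w wC.
  by rewrite supp_act //; exact: Y_act.
apply: (kgr_image (f := kact A) (g := kact (invmx A))) => // z zC.
  exact: kact_circ.
by rewrite supp_act //= kmink_e0.
Qed.
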